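(* Let $S$ be a quaternionic structure of local type of order $n$. (i) If $n$ is even and $-1=1$, then $M(S)=E_n$, the $n\times n$ matrix with $1$ on the anti-diagonal (entries $(i,n-1-i)$) and $0$ elsewhere. (ii) If $n$ is even and $-1\ne1$, then $M(S)$ is the $n\times n$ matrix with $M_{0,n-1}=M_{n-1,0}=M_{n-1,n-1}=1$, $M_{i,n-1-i}=1$ for $1\le i\le n-2$, and all other entries $0$. (iii) If $n$ is odd, then $M(S)$ is the $n\times n$ matrix with $M_{0,0}=1$, $M_{i,n-i}=1$ for $1\le i\le n-1$, and all other entries $0$.
   Context: A quaternionic structure is a triple $S=(G,-1,q)$ where $G$ is a multiplicative group in which every element is its own inverse (an $\mathbb F_2$-vector space), $-1\in G$ is distinguished (possibly $-1=1$), $-a:=(-1)a$, and $q:G\times G\to Q$ is surjective onto a set $Q$ with distinguished $0$, satisfying for all $a,b,c,d$: (Q1) $q(a,-a)=0$; (Q2) $q(a,b)=q(b,a)$; (Q3) $q(a,b)=q(a,c)\iff q(a,bc)=0$; (Q4) $q(a,b)=q(c,d)\iff\exists x$: $q(a,b)=q(a,x)=q(c,x)=q(c,d)$. The order is $\dim_{\mathbb F_2}G$. $S$ is nondegenerate if $\{a:q(a,x)=0\ \forall x\}=\{1\}$, and of local type if finite, nondegenerate, of order at least $3$, with exactly two quaternions. $B(S)$ is the abelian group (operation $\ast$) generated by $Q$ subject only to $q(a,b)\ast q(a,c)=q(a,bc)$. On $\mathbb N_0$, $\ast$ is bitwise XOR. A basis of $S$ is an ordered $\mathbb F_2$-basis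 $\mathcal A=(a_0,\dots,a_{n-1})$ of $G$ with $a_0=-1$ whenever $-1\ne1$. For an ordered basis $\mathcal B=(q_0,\dots,q_{m-1})$ of $B(S)$, $\phi_{\mathcal B}:B(S)\to(\{0,\dots,2^m-1\},\ast)$ is the isomorphism $q_k\mapsto2^k$, and $M_{\mathcal A,\mathcal B}(S)=(\phi_{\mathcal B}(q(a_i,a_j)))_{0\le i,j\le n-1}$. Matrices in $\mathrm{Mat}_n(\mathbb N_0)$ are ordered lexicographically, comparing entries row by row with the usual order on $\mathbb N_0$. The normal quaternionic matrix $M(S)$ is the lexicographic minimum of $M_{\mathcal A,\mathcal B}(S)$ over all bases $\mathcal A$ of $S$ and all ordered bases $\mathcal B$ of $B(S)$. *)

From HB Require Import structures.
From mathcomp Require Import all_boot all_order all_algebra.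
Set Implicit Arguments. Unset Strict Implicit. Unset Printing Implicit Defensive.
Import Order.TTheory GRing.Theory Num.Theory.
Local Open Scope ring_scope.

(* The group G (every element its own inverse, i.e. an F_2-vector space) is
   written ADDITIVELY: the paper's product ab is a + b, the paper's 1 is 0,
   and the distinguished element "-1" is qm1; -a := qm1 + a. *)
Record qstruct := QStruct {
  QG : finZmodType;
  qm1 : QG;
  QQ : finType;
  qz : QQ;
  qf : QG -> QG -> QQ
}.

Definition is_qstruct (S : qstruct) : Prop :=
  ((forall x : QG S, x + x = 0) /\
   (forall z : QQ S, exists a b, qf a b = z)) /\
  [/\ (forall a : QG S, qf a (qm1 S + a) = qz S),
      (forall a b : QG S, qf a b = qf b a),
      (forall a b c : QG S, qf a b = qf a c <-> qf a (b + c) = qz S)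
    & (forall a b c d : QG S, qf a b = qf c d <->
         exists x, [/\ qf a b = qf a x, qf a x = qf c x & qf c x = qf c d])].

Definition G_basis (S : qstruct) (n : nat) (a : 'I_n -> QG S) : Prop :=
  (forall x : QG S, exists s : {set 'I_n}, x = \sum_(i in s) a i) /\
  (forall s t : {set 'I_n}, \sum_(i in s) a i = \sum_(i in t) a i -> s = t).

Definition qs_order (S : qstruct) (n : nat) : Prop :=
  exists a : 'I_n -> QG S, G_basis a.

Definition S_basis (S : qstruct) (n : nat) (a : 'I_n -> QG S) : Prop :=
  G_basis a /\ (qm1 S <> 0 -> forall i : 'I_n, val i = 0%N -> a i = qm1 S).

Definition nondegenerate (S : qstruct) : Prop :=
  forall a : QG S, (forall x, qf a x = qz S) -> a = 0.

(* local type (finiteness is built into qstruct) *)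
Definition local_type (S : qstruct) : Prop :=
  [/\ nondegenerate S, (exists n, qs_order S n /\ (3 <= n)%N) & #|QQ S| = 2%N].

(* B(S): the abelian group generated by Q subject to q(a,b)*q(a,c) = q(a,bc).
   Modelled literally as the free abelian group Z^Q (functions Q -> int)
   modulo the subgroup R generated by the relators
   e_{q(a,b)} + e_{q(a,c)} - e_{q(a,bc)}. *)
Definition unitv (S : qstruct) (z : QQ S) : QQ S -> int :=
  fun z' => ((z' == z) : nat)%:Z.

Definition relator (S : qstruct) (t : QG S * QG S * QG S) : QQ S -> int :=
  fun z => unitv (qf t.1.1 t.1.2) z + unitv (qf t.1.1 t.2) z
           - unitv (qf t.1.1 (t.1.2 + t.2)) z.

Definition Beq (S : qstruct) (v w : QQ S -> int) : Prop :=
  exists c : QG S * QG S * QG S -> int,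
    forall z, v z - w z = \sum_(t : QG S * QG S * QG S) c t * relator t z.

Definition Bsum (S : qstruct) (m : nat) (b : 'I_m -> QQ S -> int)
  (s : {set 'I_m}) : QQ S -> int := fun z => \sum_(k in s) b k z.

Definition B_basis (S : qstruct) (m : nat) (b : 'I_m -> QQ S -> int) : Prop :=
  (forall v : QQ S -> int, exists s : {set 'I_m}, Beq v (Bsum b s)) /\
  (forall s t : {set 'I_m}, Beq (Bsum b s) (Bsum b t) -> s = t).

(* X = M_{A,B}(S): X i j = phi_B(q(a_i,a_j)), where phi_B sends the element
   with (unique) coordinate set s in the basis B to \sum_{k in s} 2^k. *)
Definition is_MAB (S : qstruct) (n m : nat) (a : 'I_n -> QG S)
  (b : 'I_m -> QQ S -> int) (X : 'M[nat]_n) : Prop :=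
  forall i j : 'I_n, exists s : {set 'I_m},
    Beq (unitv (qf (a i) (a j))) (Bsum b s) /\
    X i j = (\sum_(k in s) 2 ^ (val k))%N.

Definition attained (S : qstruct) (n : nat) (X : 'M[nat]_n) : Prop :=
  exists (a : 'I_n -> QG S) (m : nat) (b : 'I_m -> QQ S -> int),
    [/\ S_basis a, B_basis b & is_MAB a b X].

Definition lex_lt (n : nat) (X Y : 'M[nat]_n) : Prop :=
  exists i j : 'I_n, (X i j < Y i j)%N /\
    forall i' j' : 'I_n, ((i' < i)%N \/ (i' = i /\ (j' < j)%N)) ->
      X i' j' = Y i' j'.

Definition normal_matrix (S : qstruct) (n : nat) (X : 'M[nat]_n) : Prop :=
  attained S X /\ forall Y, attained S Y -> X = Y \/ lex_lt X Y.

Definition Mat_i (n : nat) : 'M[nat]_n :=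
  \matrix_(i, j) nat_of_bool ((i : nat) + j == n - 1)%N.

Definition Mat_ii (n : nat) : 'M[nat]_n :=
  \matrix_(i, j) nat_of_bool
    [|| ((i : nat) == 0) && ((j : nat) == n - 1),
        ((i : nat) == n - 1) && ((j : nat) == 0),
        ((i : nat) == n - 1) && ((j : nat) == n - 1)
      | (1 <= i <= n - 2) && ((j : nat) == n - 1 - i)]%N.

Definition Mat_iii (n : nat) : 'M[nat]_n :=
  \matrix_(i, j) nat_of_bool
    [|| ((i : nat) == 0) && ((j : nat) == 0)
      | (1 <= i <= n - 1) && ((j : nat) == n - i)]%N.

From Pilot Require Import Defs.
From mathcomp Require Import all_boot all_algebra zify.
Set Implicit Arguments. Unset Strict Implicit. Unset Printing Implicit Defensive.
Import GRing.Theory.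

(* Since #|Q| = 2, beta(a, b) := [q(a, b) != 0] is a nondegenerate symmetric
   F_2-bilinear form on G with beta(a, a) = beta(a, -1), and B(S) is cyclic of
   order 2, generated by the nonzero quaternion; hence M_{A,B}(S) is just the
   Gram matrix of beta in the basis A.  A Gram-Schmidt process splits off
   hyperbolic pairs from the orthogonal complement of nothing (-1 = 1), of -1
   (beta(-1, -1) = 1), or of {-1, z} with beta(-1, z) = 1 (otherwise); listing
   the pairs in mirror positions yields a basis with the claimed Gram matrix,
   and splitting off one pair too many in the wrong parity contradicts
   #|G| = 2^n.  Conversely, fill in the Gram matrix of an arbitrary basis row
   by row: a 0 where the claimed matrix has its first 1 would put a nontrivial
   combination of basis vectors into the radical of beta. *)

Lemma card_set_pow (T : finType) : #|{set T}| = 2 ^ #|T|.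
Proof. by rewrite -[in RHS]cardsT -card_powerset powersetT cardsT. Qed.

Lemma card2_other (T : finType) (z0 : T) : #|T| = 2 ->
  exists2 e : T, e != z0 & forall z, z = z0 \/ z = e.
Proof.
move=> card2; have /cards1P[e eE] : #|[set~ z0]| == 1 by rewrite cardsC1 card2.
have : e \in [set~ z0] by rewrite eE set11.
rewrite in_setC1 => ez0; exists e => // z; have [->|zz0] := eqVneq z z0; first by left.
by right; apply/set1P; rewrite -eE in_setC1.
Qed.

Lemma set_ord1 (s : {set 'I_1}) : s = set0 \/ s = [set ord0].
Proof.
have [s0|s0] := boolP (ord0 \in s); [right | left]; apply/setP => k;
  by rewrite (ord1 k) !inE ?eqxx // (negPf s0).
Qed.

Lemma big_addb_mem n (s : {set 'I_n}) (j : 'I_n) :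
  \big[addb/false]_(i in s) (i == j) = (j \in s).
Proof.
have [js|jNs] := boolP (j \in s).
  by rewrite (bigD1 j) //= eqxx big1 // => i /andP[_ /negPf].
by rewrite big1 // => i iS; apply: contraNF jNs => /eqP <-.
Qed.

Lemma big_addb_pick k (b : nat -> bool) j : (j < k)%N ->
  \big[addb/false]_(i < k) (b i && (i == j :> nat)) = b j.
Proof.
move=> ltjk; rewrite (bigD1 (Ordinal ltjk)) //= eqxx andbT big1 ?addbF // => i.
by move=> ij; apply/andP => -[_ /eqP eqij]; move: ij; rewrite -val_eqE /= eqij eqxx.
Qed.

Definition lex_before m (i' j' i j : 'I_m) : Prop := (i' < i)%N \/ i' = i /\ (j' < j)%N.

Lemma lex_before_rank m (i' j' i j : 'I_m) :
  lex_before i' j' i j -> (i' * m + j' < i * m + j)%N.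
Proof.
case=> [lt_i|[-> lt_j]]; last by rewrite ltn_add2l.
have := ltn_ord j'; have : (i'.+1 * m <= i * m)%N by rewrite leq_mul2r lt_i orbT.
rewrite mulSn; lia.
Qed.

Definition bool_mx m (T : 'I_m -> 'I_m -> bool) : 'M[nat]_m :=
  (\matrix_(i, j) nat_of_bool (T i j))%R.

Lemma lex_min_of_forced m (T Y : 'I_m -> 'I_m -> bool) :
  (forall i j, (forall i' j', lex_before i' j' i j -> Y i' j' = T i' j') -> T i j -> Y i j) ->
  bool_mx T = bool_mx Y \/ lex_lt (bool_mx T) (bool_mx Y).
Proof.
move=> forced.
have [/existsP[p0 neq0]|/existsPn same] :=
  boolP [exists p : 'I_m * 'I_m, Y p.1 p.2 != T p.1 p.2]; last first.
  by left; apply/matrixP => i j; rewrite !mxE; move/negPn/eqP: (same (i, j)) => ->.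
case: (@arg_minnP _ p0 (fun p : 'I_m * 'I_m => Y p.1 p.2 != T p.1 p.2)
  (fun p => p.1 * m + p.2)%N neq0) => [[i j]] /= neq_ij first.
have agree i' j' : lex_before i' j' i j -> Y i' j' = T i' j'.
  move=> /lex_before_rank lt; apply/eqP; apply: contraTT lt => /(first (i', j')).
  by rewrite leqNgt.
right; exists i, j; split; last by move=> i' j' /agree; rewrite !mxE => ->.
rewrite !mxE; move: neq_ij; case Tij: (T i j); last by case: (Y i j).
by rewrite (forced i j agree Tij).
Qed.

(* Convertible to [G_basis] for [G := QG S]. *)
Definition sum_basis (G : zmodType) (n : nat) (a : 'I_n -> G) : Prop :=
  (forall x, exists s : {set 'I_n}, x = (\sum_(i in s) a i)%R) /\
  injective (fun s : {set 'I_n} => (\sum_(i in s) a i)%R).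

Section F2Form.
Local Open Scope ring_scope.
Variables (G : finZmodType) (bf : G -> G -> bool) (w : G).
Hypothesis addxx : forall x : G, x + x = 0.
Hypothesis bfC : forall x y, bf x y = bf y x.
Hypothesis bfD : forall x y z, bf x (y + z) = bf x y (+) bf x z.
Hypothesis bf_diag : forall x, bf x x = bf x w.
Hypothesis bf_nondeg : forall x, (forall y, bf x y = false) -> x = 0.

Lemma bfx0 x : bf x 0 = false.
Proof. by have := bfD x 0 0; rewrite addr0; case: (bf x 0). Qed.

Lemma bf0x x : bf 0 x = false.
Proof. by rewrite bfC bfx0. Qed.

Lemma bfDl x y z : bf (x + y) z = bf x z (+) bf y z.
Proof. by rewrite bfC bfD !(bfC z). Qed.

Lemma bf_sumr (I : finType) (P : pred I) (f : I -> G) x :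
  bf x (\sum_(i | P i) f i) = \big[addb/false]_(i | P i) bf x (f i).
Proof. exact: (big_morph (bf x) (bfD x) (bfx0 x)). Qed.

Lemma bf_suml (I : finType) (P : pred I) (f : I -> G) x :
  bf (\sum_(i | P i) f i) x = \big[addb/false]_(i | P i) bf (f i) x.
Proof. by rewrite bfC bf_sumr; apply: eq_bigr => i _; apply: bfC. Qed.

Lemma bf_ifr (b : bool) x y : bf x (if b then y else 0) = b && bf x y.
Proof. by case: b; rewrite ?bfx0. Qed.

Lemma bf_ifl (b : bool) x y : bf (if b then y else 0) x = b && bf y x.
Proof. by case: b; rewrite ?bf0x. Qed.

Lemma exists_partner x : x != 0 -> exists y, bf x y.
Proof.
move=> x0; apply/existsP; apply: contraNT x0 => /existsPn xorth.
by apply/eqP/bf_nondeg => y; apply/negbTE/xorth.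
Qed.

Section DualFamily.
Variable n : nat.

Lemma inj_sum_of_dual (a d : 'I_n -> G) :
  (forall i j, bf (a i) (d j) = (i == j)) ->
  injective (fun s : {set 'I_n} => \sum_(i in s) a i).
Proof.
move=> dual s t /(congr1 (bf^~ (d _))) eqst; apply/setP => j.
have := eqst j; rewrite /= !bf_suml.
under eq_bigr do rewrite dual; under [in RHS]eq_bigr do rewrite dual.
by rewrite !big_addb_mem.
Qed.

Lemma dual_card_le (a d : 'I_n -> G) :
  (forall i j, bf (a i) (d j) = (i == j)) -> (2 ^ n <= #|G|)%N.
Proof.
by move=> /inj_sum_of_dual inj; rewrite -{1}(card_ord n) -card_set_pow; apply: leq_card inj.
Qed.

Lemma card_sum_basis (a : 'I_n -> G) : sum_basis a -> #|G| = (2 ^ n)%N.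
Proof.
move=> [span inj]; apply/eqP; rewrite eqn_leq -(card_ord n) -card_set_pow.
rewrite (leq_card _ inj) andbT -(card_codom inj); apply: subset_leq_card.
by apply/subsetP => x _; have [s ->] := span x; apply: codom_f.
Qed.

Lemma sum_basis_of_dual (a d : 'I_n -> G) : #|G| = (2 ^ n)%N ->
  (forall i j, bf (a i) (d j) = (i == j)) -> sum_basis a.
Proof.
move=> cardG /inj_sum_of_dual inj; split => // x.
have : x \in codom (fun s : {set 'I_n} => \sum_(i in s) a i).
  by apply: (inj_card_onto inj); rewrite cardG card_set_pow card_ord.
by case/codomP => s ->; exists s.
Qed.

Lemma sum_basis_orth_eq0 (a : 'I_n -> G) x : sum_basis a ->
  (forall l, bf x (a l) = false) -> x = 0.
Proof.
move=> [span _] xorth; apply: bf_nondeg => y; have [s ->] := span y.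
by rewrite bf_sumr big1.
Qed.

End DualFamily.

Definition orth_to (x : G) (F : seq G) : Prop := forall f, f \in F -> bf x f = false.

Definition orth_pairs (x : G) (u v : nat -> G) (k : nat) : Prop :=
  forall i, (i < k)%N -> bf x (u i) = false /\ bf x (v i) = false.

Definition hyperbolic_pairs (F : seq G) (u v : nat -> G) (k : nat) : Prop :=
  (forall i j, (i < k)%N -> (j < k)%N ->
     [/\ bf (u i) (u j) = false, bf (v i) (v j) = false & bf (u i) (v j) = (i == j)])
  /\ (forall i, (i < k)%N -> orth_to (u i) F /\ orth_to (v i) F).

(* [pF] projects onto the span of [F] along the orthogonal of [F], and that
   orthogonal is alternating. *)
Definition splits_alternating (F : seq G) (pF : G -> G) : Prop :=
  [/\ forall z, orth_to (z + pF z) F,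
      forall x z, orth_to x F -> bf x (pF z) = false
    & forall x, orth_to x F -> bf x x = false].

Lemma hyperbolic_proj F pF u v k z :
  splits_alternating F pF -> hyperbolic_pairs F u v k ->
  exists y, [/\ orth_to y F, orth_pairs y u v k
              & forall x, orth_to x F -> orth_pairs x u v k -> bf x y = bf x z].
Proof.
move=> [pF_orth pF_in _] [Huv uvF].
pose cor := \sum_(i < k) ((if bf z (v i) then u i else 0) + (if bf z (u i) then v i else 0)).
exists (z + pF z + cor); split.
- move=> f fF; rewrite bfDl pF_orth // bf_suml big1 // => i _.
  have [uiF viF] := uvF i (ltn_ord i).
  by rewrite bfDl !bf_ifl uiF ?viF ?andbF.
- move=> j ltjk; have [ujF vjF] := uvF j ltjk.
  rewrite !bfDl (bfC (pF z)) pF_in // (bfC (pF z)) pF_in // !addbF !bf_suml; split.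
  + rewrite (eq_bigr (fun i : 'I_k => bf z (u i) && (i == j :> nat))).
      by rewrite (big_addb_pick (fun i => bf z (u i))) ?addbb.
    move=> i _; have [uu _ uv] := Huv i j (ltn_ord i) ltjk.
    have [_ _ vu] := Huv j i ltjk (ltn_ord i).
    by rewrite bfDl !bf_ifl (bfC (v i)) uu vu andbF eq_sym.
  + rewrite (eq_bigr (fun i : 'I_k => bf z (v i) && (i == j :> nat))).
      by rewrite (big_addb_pick (fun i => bf z (v i))) ?addbb.
    move=> i _; have [_ vv uv] := Huv i j (ltn_ord i) ltjk.
    by rewrite bfDl !bf_ifl vv uv andbF addbF.
- move=> x xF xuv; rewrite !bfD pF_in // addbF bf_sumr big1 ?addbF // => i _.
  by have [xu xv] := xuv i (ltn_ord i); rewrite bfD !bf_ifr xu xv !andbF.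
Qed.

Lemma splits_alternating_nil : w = 0 -> splits_alternating [::] (fun _ => 0).
Proof.
by move=> w0; split=> [z f|x z _|x _]; rewrite ?in_nil ?bf_diag ?w0 ?bfx0.
Qed.

Lemma splits_alternating_w : bf w w ->
  splits_alternating [:: w] (fun z => if bf z w then w else 0).
Proof.
move=> ww; split.
- by move=> z f; rewrite inE => /eqP->; rewrite bfDl bf_ifl ww andbT addbb.
- by move=> x z xw; rewrite bf_ifr xw ?mem_head ?andbF.
- by move=> x xw; rewrite bf_diag xw ?mem_head.
Qed.

Lemma splits_alternating_wz z : ~~ bf w w -> bf w z ->
  splits_alternating [:: w; z]
    (fun y => (if bf y z then w else 0) + (if bf y w then w + z else 0)).
Proof.
move=> /negbTE ww wz; have zz : bf z z by rewrite bf_diag bfC.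
split.
- move=> y f; rewrite !inE => /orP[]/eqP->;
  by rewrite !bfDl !bf_ifl !bfDl ?(bfC z w) ?ww ?wz ?zz; case: (bf y z); case: (bf y w).
- move=> x y xwz; have xw := xwz w (mem_head _ _).
  have xz : bf x z = false by apply: xwz; rewrite !inE eqxx orbT.
  by rewrite !bfD !bf_ifr !bfD xw xz !andbF.
- by move=> x xwz; rewrite bf_diag xwz ?mem_head.
Qed.

(* The pairs laid out as u_0, ..., u_(k-1), v_(k-1), ..., v_0. *)
Definition hblock (u v : nat -> G) (k x : nat) : G :=
  if (x < k)%N then u x else v (2 * k - 1 - x)%N.

Lemma bf_hblock F u v k x y : hyperbolic_pairs F u v k ->
  (x < 2 * k)%N -> (y < 2 * k)%N ->
  bf (hblock u v k x) (hblock u v k y) = (x + y == 2 * k - 1)%N.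
Proof.
move=> [Huv _] ltx lty; rewrite /hblock.
case: (ltnP x k) => ltxk; case: (ltnP y k) => ltyk.
- by have [-> _ _] := Huv x y ltxk ltyk; lia.
- by have [_ _ ->] := Huv x (2 * k - 1 - y)%N ltxk ltac:(lia); lia.
- by rewrite bfC; have [_ _ ->] := Huv y (2 * k - 1 - x)%N ltyk ltac:(lia); lia.
- by have [_ -> _] := Huv (2 * k - 1 - x)%N (2 * k - 1 - y)%N ltac:(lia) ltac:(lia); lia.
Qed.

Lemma hblock_orth F u v k x f : hyperbolic_pairs F u v k -> f \in F ->
  (x < 2 * k)%N -> bf f (hblock u v k x) = false.
Proof.
move=> [_ uvF] fF ltx; rewrite bfC /hblock; case: ltnP => ltxk.
  by have [uF _] := uvF x ltxk; apply: uF.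
by have [_ vF] := uvF (2 * k - 1 - x)%N ltac:(lia); apply: vF.
Qed.

Definition pat_i (m i j : nat) : bool := (i + j == m - 1)%N.

Definition pat_ii (m i j : nat) : bool :=
  [|| (i == 0) && (j == m - 1), (i == m - 1) && (j == 0),
      (i == m - 1) && (j == m - 1) | (1 <= i <= m - 2) && (j == m - 1 - i)]%N.

Definition pat_iii (m i j : nat) : bool :=
  [|| (i == 0) && (j == 0) | (1 <= i <= m - 1) && (j == m - i)]%N.

Lemma pat_iC m i j : pat_i m i j = pat_i m j i.
Proof. by rewrite /pat_i addnC. Qed.

Lemma pat_i_row m k l : (k < m)%N -> pat_i m k l = (l == m - k.+1)%N.
Proof. by rewrite /pat_i; lia. Qed.

Lemma pat_iiC m i j : (i < m)%N -> (j < m)%N -> pat_ii m i j = pat_ii m j i.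
Proof. by rewrite /pat_ii; lia. Qed.

Lemma pat_ii_lt m i j : (i < j)%N -> (j < m)%N -> pat_ii m i j -> (i.+1 < m)%N.
Proof. by rewrite /pat_ii; lia. Qed.

Lemma pat_ii_row m k l : (k.+1 < m)%N -> (l < m)%N -> pat_ii m k l = (l == m - k.+1)%N.
Proof. by rewrite /pat_ii; case: (eqVneq k 0) => [->|]; lia. Qed.

Lemma pat_iiiC m i j : (i < m)%N -> (j < m)%N -> pat_iii m i j = pat_iii m j i.
Proof. by rewrite /pat_iii; lia. Qed.

Lemma pat_iii_row m k l : (k < m)%N -> (l < m)%N ->
  pat_iii m k l = (l == if k == 0 then 0 else m - k)%N.
Proof. by rewrite /pat_iii; case: (eqVneq k 0) => [->|] /=; lia. Qed.

Definition ord_opp m (j : 'I_m) : 'I_m :=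
  Ordinal (ltn_pmod (m - j) (leq_ltn_trans (leq0n j) (ltn_ord j))).

Lemma ord_oppE m (j : 'I_m) :
  (ord_opp j : nat) = if (j : nat) == 0%N then 0%N else (m - j)%N.
Proof.
rewrite /=; case: eqVneq => [->|j0]; first by rewrite subn0 modnn.
by rewrite modn_small //; have := ltn_ord j; lia.
Qed.

Lemma ord_oppK m : involutive (@ord_opp m).
Proof.
move=> j; apply: ord_inj; rewrite !ord_oppE; have := ltn_ord j.
case: (eqVneq (j : nat) 0%N) => [->|j0] /=; first by [].
by case: eqVneq; lia.
Qed.

Lemma gram_pat_i_of_pairs F u v k m : hyperbolic_pairs F u v k -> m = (2 * k)%N ->
  exists a : 'I_m -> G, forall i j, bf (a i) (a j) = pat_i m i j.
Proof.
by move=> uv m2k; exists (fun i => hblock u v k i) => i j; rewrite (bf_hblock uv) -m2k.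
Qed.

Lemma gram_pat_iii_of_pairs u v k m : hyperbolic_pairs [:: w] u v k -> bf w w -> m = (2 * k).+1 ->
  exists a : 'I_m -> G, (forall i : 'I_m, val i = 0%N -> a i = w) /\
    forall i j, bf (a i) (a j) = pat_iii m i j.
Proof.
move=> uv ww m2k.
pose a (i : 'I_m) := if (i : nat) == 0%N then w else hblock u v k i.-1.
have a_cases (i : 'I_m) : (i : nat) = 0%N /\ a i = w \/ (0 < i)%N /\ a i = hblock u v k i.-1.
  by rewrite /a; case: eqVneq => i0; [left | right; rewrite lt0n].
exists a; split => [i /eqP i0|i j]; first by rewrite /a i0.
have := ltn_ord i; have := ltn_ord j; rewrite /pat_iii.
case: (a_cases i) => -[i0 ->]; case: (a_cases j) => -[j0 ->] ltj lti;
  rewrite ?ww ?(bfC (hblock _ _ _ _) w) ?(bf_hblock uv) ?(hblock_orth uv) ?mem_head //; lia.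
Qed.

Lemma gram_pat_ii_of_pairs u v k z m : hyperbolic_pairs [:: w; z] u v k -> ~~ bf w w -> bf w z ->
  m = (2 * k).+2 ->
  exists a : 'I_m -> G, (forall i : 'I_m, val i = 0%N -> a i = w) /\
    forall i j, bf (a i) (a j) = pat_ii m i j.
Proof.
move=> uv /negbTE ww wz m2k; have zz : bf z z by rewrite bf_diag bfC.
pose a (i : 'I_m) := if (i : nat) == 0%N then w else if (i : nat) == m.-1 then z
                     else hblock u v k i.-1.
have a_cases (i : 'I_m) : [\/ (i : nat) = 0%N /\ a i = w, (i : nat) = m.-1 /\ a i = z
                            | (0 < i < m.-1)%N /\ a i = hblock u v k i.-1].
  have := ltn_ord i; rewrite /a; case: eqVneq => i0; first by constructor 1.
  by case: eqVneq => i1 ltim; [constructor 2 | constructor 3; split => //; lia].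
exists a; split => [i /eqP i0|i j]; first by rewrite /a i0.
have := ltn_ord i; have := ltn_ord j; rewrite /pat_ii.
case: (a_cases i) => -[i0 ->]; case: (a_cases j) => -[j0 ->] ltj lti;
  rewrite ?(bfC z w) ?(bfC (hblock _ _ _ _) w) ?(bfC (hblock _ _ _ _) z) ?ww ?wz ?zz
    ?(bf_hblock uv) ?(hblock_orth uv) ?inE ?eqxx ?orbT //; lia.
Qed.

Lemma dual_of_pat_i m (a : 'I_m -> G) : (forall i j, bf (a i) (a j) = pat_i m i j) ->
  exists d : 'I_m -> G, forall i j, bf (a i) (d j) = (i == j).
Proof.
move=> gram; exists (fun j => a (rev_ord j)) => i j.
by rewrite gram /pat_i -val_eqE /=; have := ltn_ord i; have := ltn_ord j; lia.
Qed.

Lemma dual_of_pat_ii m (a : 'I_m -> G) : (1 < m)%N ->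
  (forall i j, bf (a i) (a j) = pat_ii m i j) ->
  exists d : 'I_m -> G, forall i j, bf (a i) (d j) = (i == j).
Proof.
move=> m_gt1 gram.
exists (fun j : 'I_m => if (j : nat) == 0%N then a (rev_ord j) + a j else a (rev_ord j)).
move=> i j; have := ltn_ord i; have := ltn_ord j; rewrite -val_eqE /=.
case: eqVneq => j0; rewrite ?bfD !gram /pat_ii ?j0 /=;
  case: (eqVneq (i : nat) 0%N) => [->|?]; try case: (eqVneq (i : nat) (m - 1)%N) => [->|?]; lia.
Qed.

Lemma dual_of_pat_iii m (a : 'I_m -> G) : (forall i j, bf (a i) (a j) = pat_iii m i j) ->
  exists d : 'I_m -> G, forall i j, bf (a i) (d j) = (i == j).
Proof.
move=> gram; exists (fun j => a (ord_opp j)) => i j.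
rewrite gram /pat_iii ord_oppE -val_eqE /=; have := ltn_ord i; have := ltn_ord j.
by case: (eqVneq (j : nat) 0%N); lia.
Qed.

Variable n : nat.
Hypothesis cardG : #|G| = (2 ^ n)%N.

Lemma exists_orthogonal (s : seq G) : (size s < n)%N ->
  exists2 x, x != 0 & forall f, f \in s -> bf x f = false.
Proof.
move=> lt_s_n; pose sig x := [ffun i : 'I_(size s) => bf x (nth 0 s i)].
have /injectivePn [x [y xy sigxy]] : ~~ injectiveb sig.
  apply/injectiveP => /leq_card.
  by rewrite card_ffun card_bool card_ord cardG leq_exp2l //; lia.
exists (x + y).
  by apply: contra xy => /eqP xy0; rewrite -[x]addr0 -(addxx y) addrA xy0 add0r.
move=> f fs; pose i := Ordinal (etrans (index_mem f s) fs).
have := congr1 (fun g : {ffun _ -> bool} => g i) sigxy.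
by rewrite !ffunE /= nth_index // bfDl => ->; rewrite addbb.
Qed.

Lemma hyperbolic_pairs_extend F pF u v k :
  splits_alternating F pF -> hyperbolic_pairs F u v k -> (size F + 2 * k < n)%N ->
  exists u' v', hyperbolic_pairs F u' v' k.+1.
Proof.
move=> splitF [Huv uvF] lt_n.
have [x x0 xorth] : exists2 x, x != 0 &
    forall f, f \in F ++ map u (iota 0 k) ++ map v (iota 0 k) -> bf x f = false.
  by apply: exists_orthogonal; rewrite !size_cat !size_map size_iota; lia.
have xF : orth_to x F by move=> f fF; apply: xorth; rewrite mem_cat fF.
have xuv : orth_pairs x u v k.
  by move=> i ltik; rewrite !xorth // !mem_cat map_f ?orbT // mem_iota.
have [z xz] := exists_partner x0.
have [y [yF yuv yproj]] := hyperbolic_proj z splitF (conj Huv uvF).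
have xy : bf x y by rewrite yproj.
have [_ _ alt] := splitF.
have ltSE m : (m < k.+1)%N -> m = k \/ (m < k)%N by lia.
exists (fun i => if i == k then x else u i), (fun i => if i == k then y else v i); split.
  move=> i j /ltSE[->|ltik] /ltSE[->|ltjk];
    rewrite ?eqxx ?(ltn_eqF ltik) ?(ltn_eqF ltjk).
  - by rewrite !alt.
  - have [-> ->] := xuv j ltjk; have [_ ->] := yuv j ltjk.
    by rewrite eq_sym ltn_eqF.
  - rewrite (bfC (u i) x) (bfC (v i) y) (bfC (u i) y).
    by have [-> _] := xuv i ltik; have [-> ->] := yuv i ltik.
  - exact: Huv.
move=> i /ltSE[->|ltik]; first by rewrite eqxx.
by rewrite ltn_eqF //; apply: uvF.
Qed.

(* One pair more than fits into dimension n is allowed; the parity lemmas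
   below derive their contradiction from it. *)
Lemma hyperbolic_pairs_exist F pF k : splits_alternating F pF ->
  (size F + 2 * k <= n.+1)%N -> exists u v, hyperbolic_pairs F u v k.
Proof.
move=> splitF; elim: k => [|k IHk] lek.
  by exists (fun _ => 0), (fun _ => 0); split => // i.
have [u [v uv]] := IHk ltac:(lia).
by apply: hyperbolic_pairs_extend uv _; [exact: splitF | lia].
Qed.

Lemma order_gt0 (x : G) : x != 0 -> (0 < n)%N.
Proof.
move=> x0; have : (1 < #|G|)%N by apply/card_gt1P; exists x, 0.
by rewrite cardG -{1}(expn0 2) ltn_exp2l.
Qed.

Lemma even_of_w_eq0 : w = 0 -> ~~ odd n.
Proof.
move=> w0; apply/negP => odd_n.
have [u [v uv]] := hyperbolic_pairs_exist (k := n./2.+1) (splits_alternating_nil w0)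
  ltac:(rewrite /=; lia).
have [a gram] := gram_pat_i_of_pairs (m := n.+1) uv ltac:(lia).
have [d /dual_card_le] := dual_of_pat_i gram.
by rewrite cardG leq_exp2l // ltnn.
Qed.

Lemma odd_of_bf_ww : bf w w -> odd n.
Proof.
move=> ww; apply/negPn/negP => even_n.
have [u [v uv]] := hyperbolic_pairs_exist (k := n./2) (splits_alternating_w ww)
  ltac:(rewrite /=; lia).
have [a [_ gram]] := gram_pat_iii_of_pairs (m := n.+1) uv ww ltac:(lia).
have [d /dual_card_le] := dual_of_pat_iii gram.
by rewrite cardG leq_exp2l // ltnn.
Qed.

Lemma even_of_not_bf_ww : w != 0 -> ~~ bf w w -> ~~ odd n.
Proof.
move=> w0 ww; apply/negP => odd_n; have [z wz] := exists_partner w0.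
have [u [v uv]] := hyperbolic_pairs_exist (k := n./2) (splits_alternating_wz ww wz)
  ltac:(rewrite /=; lia).
have [a [_ gram]] := gram_pat_ii_of_pairs (m := n.+1) uv ww wz ltac:(lia).
have [d /dual_card_le] := dual_of_pat_ii (m := n.+1) ltac:(lia) gram.
by rewrite cardG leq_exp2l // ltnn.
Qed.

Lemma odd_order_bf_ww : odd n -> w != 0 /\ bf w w.
Proof.
move=> odd_n; have w0 : w != 0 by apply: contraL odd_n => /eqP /even_of_w_eq0.
by split=> //; apply: contraLR odd_n => /(even_of_not_bf_ww w0).
Qed.

(* Convertible to [S_basis] for [bf := qbf S] and [w := qm1 S]. *)
Definition w_basis (a : 'I_n -> G) : Prop :=
  sum_basis a /\ (w <> 0 -> forall i : 'I_n, val i = 0%N -> a i = w).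

Lemma exists_basis_pat_i : w = 0 -> ~~ odd n ->
  exists2 a : 'I_n -> G, w_basis a & forall i j, bf (a i) (a j) = pat_i n i j.
Proof.
move=> w0 even_n.
have [u [v uv]] := hyperbolic_pairs_exist (k := n./2) (splits_alternating_nil w0)
  ltac:(rewrite /=; lia).
have [a gram] := gram_pat_i_of_pairs (m := n) uv ltac:(lia).
have [d dual] := dual_of_pat_i gram.
by exists a => //; split=> [|//]; apply: sum_basis_of_dual cardG dual.
Qed.

Lemma exists_basis_pat_ii : w <> 0 -> ~~ odd n ->
  exists2 a : 'I_n -> G, w_basis a & forall i j, bf (a i) (a j) = pat_ii n i j.
Proof.
move=> /eqP w0 even_n; have n_gt0 := order_gt0 w0.
have ww : ~~ bf w w by apply: contra even_n; apply: odd_of_bf_ww.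
have [z wz] := exists_partner w0.
have [u [v uv]] := hyperbolic_pairs_exist (k := n./2.-1) (splits_alternating_wz ww wz)
  ltac:(rewrite /=; lia).
have [a [a0 gram]] := gram_pat_ii_of_pairs (m := n) uv ww wz ltac:(lia).
have [d dual] := dual_of_pat_ii (m := n) ltac:(lia) gram.
by exists a => //; split=> //; apply: sum_basis_of_dual cardG dual.
Qed.

Lemma exists_basis_pat_iii : odd n ->
  exists2 a : 'I_n -> G, w_basis a & forall i j, bf (a i) (a j) = pat_iii n i j.
Proof.
move=> odd_n; have [_ ww] := odd_order_bf_ww odd_n.
have [u [v uv]] := hyperbolic_pairs_exist (k := n./2) (splits_alternating_w ww)
  ltac:(rewrite /=; lia).
have [a [a0 gram]] := gram_pat_iii_of_pairs (m := n) uv ww ltac:(lia).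
have [d dual] := dual_of_pat_iii gram.
by exists a => //; split=> //; apply: sum_basis_of_dual cardG dual.
Qed.

(* Otherwise a i plus the a k (k < i) whose column tau k it meets lies in the
   radical. *)
Lemma gram_entry_forced (a : 'I_n -> G) (tau : 'I_n -> 'I_n) (i j : 'I_n) :
  sum_basis a -> injective tau ->
  (forall k l : 'I_n, (k < i)%N -> bf (a k) (a l) = (l == tau k)) ->
  (forall l : 'I_n, l != j -> (forall k : 'I_n, (k < i)%N -> l != tau k) ->
     bf (a i) (a l) = false) ->
  bf (a i) (a j).
Proof.
move=> [span inj] tau_inj rows row_i; apply: contraT => /negbTE aij.
pose s := [set k : 'I_n | (k < i)%N && bf (a i) (a (tau k))].
have orth l : bf (a i + \sum_(k in s) a k) (a l) = false.
  rewrite bfDl bf_suml (eq_bigr (fun k => l == tau k)) => [|k]; last first.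
    by rewrite inE => /andP[/rows->].
  have [/existsP[k0 /andP[k0i /eqP->]]|/existsPn notim] :=
    boolP [exists k0 : 'I_n, (k0 < i)%N && (l == tau k0)].
    rewrite (eq_bigr (fun k => k == k0)) => [|k _]; last by rewrite (inj_eq tau_inj) eq_sym.
    by rewrite big_addb_mem inE k0i addbb.
  have notim' (k : 'I_n) : (k < i)%N -> l != tau k by move=> ki; have := notim k; rewrite ki.
  rewrite big1 ?addbF => [|k]; last by rewrite inE => /andP[/notim' /negbTE].
  by have [->|lj] := eqVneq l j; last by apply: row_i.
have i_notin : i \notin s by rewrite inE ltnn.
have : i |: s = set0.
  apply: (inj); rewrite /= big_set0 big_setU1 //=.
  exact: (sum_basis_orth_eq0 (conj span inj)) orth.
by move/setP/(_ i); rewrite !inE eqxx.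
Qed.

Definition forced_ones (a : 'I_n -> G) (T : nat -> nat -> bool) : Prop :=
  forall i j : 'I_n, (forall i' j', lex_before i' j' i j -> bf (a i') (a j') = T i' j') ->
    T i j -> bf (a i) (a j).

Lemma forced_ones_offdiag (a : 'I_n -> G) (T : nat -> nat -> bool) (tau : 'I_n -> 'I_n) :
  sum_basis a -> injective tau -> (forall i j : 'I_n, T i j = T j i) ->
  (forall i j : 'I_n, (i < j)%N -> T i j -> [/\
     forall k l : 'I_n, (k < i)%N -> T k l = (l == tau k),
     forall l : 'I_n, (l < j)%N -> T i l = false &
     forall l : 'I_n, (j < l)%N -> exists2 k : 'I_n, (k < i)%N & l = tau k]) ->
  forall i j : 'I_n, i != j ->
    (forall i' j', lex_before i' j' i j -> bf (a i') (a j') = T i' j') ->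
    T i j -> bf (a i) (a j).
Proof.
move=> basis tau_inj Tsym Trows i j ij before Tij.
have [ltji|ltij|eqji] := ltngtP j i; last by move: ij; rewrite (ord_inj eqji) eqxx.
  by rewrite bfC before; [rewrite Tsym | left].
have [rows first later] := Trows i j ltij Tij.
apply: (gram_entry_forced basis tau_inj) => [k l ki|l lj notim].
  by rewrite before ?rows //; left.
have [ltlj|ltjl|eqlj] := ltngtP l j; last by move: lj; rewrite (ord_inj eqlj) eqxx.
  by rewrite before ?first //; right.
by have [k ki ltau] := later l ltjl; have := notim k ki; rewrite ltau eqxx.
Qed.

Lemma forced_ones_i (a : 'I_n -> G) : sum_basis a -> ~~ odd n -> forced_ones a (pat_i n).
Proof.
move=> basis even_n i j before Tij; have [eqij|ij] := eqVneq i j.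
  by move: Tij; rewrite eqij /pat_i; have := ltn_ord j; lia.
apply: (forced_ones_offdiag basis (@rev_ord_inj n)) ij before Tij => [i' j'|i' j' _].
  exact: pat_iC.
rewrite /pat_i => Tij'; split=> [k l _|l ltlj|l ltjl].
- by rewrite -/(pat_i n k l) pat_i_row.
- by lia.
- by exists (rev_ord l); rewrite ?rev_ordK //=; have := ltn_ord l; lia.
Qed.

Lemma forced_ones_ii (a : 'I_n -> G) : w_basis a -> w <> 0 -> ~~ odd n ->
  forced_ones a (pat_ii n).
Proof.
move=> [basis a0] w0 even_n i j before Tij; have [eqij|ij] := eqVneq i j.
  have n_gt0 : (0 < n)%N by have := ltn_ord i; lia.
  have i_last : (i : nat) = n.-1.
    by move: Tij; rewrite eqij /pat_ii; have := ltn_ord j; lia.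
  rewrite -eqij bf_diag -(a0 w0 (Ordinal n_gt0)) // before.
    by rewrite /pat_ii /= i_last; lia.
  by right; split=> //=; rewrite -eqij; lia.
apply: (forced_ones_offdiag basis (@rev_ord_inj n)) ij before Tij => [i' j'|i' j' ltij Tij'].
  by apply: pat_iiC.
have lt_i'n := pat_ii_lt ltij (ltn_ord j') Tij'.
split=> [k l ki|l ltlj|l ltjl].
- by rewrite pat_ii_row //; lia.
- by move: Tij'; rewrite /pat_ii; lia.
- exists (rev_ord l); rewrite ?rev_ordK //=.
  by move: Tij'; rewrite /pat_ii; have := ltn_ord l; lia.
Qed.

Lemma forced_ones_iii (a : 'I_n -> G) : w_basis a -> w <> 0 -> bf w w -> odd n ->
  forced_ones a (pat_iii n).
Proof.
move=> [basis a0] w0 ww odd_n i j before Tij; have [eqij|ij] := eqVneq i j.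
  have i0 : (i : nat) = 0%N by move: Tij; rewrite eqij /pat_iii; have := ltn_ord j; lia.
  by rewrite -eqij a0.
apply: (forced_ones_offdiag basis (inv_inj (@ord_oppK n))) ij before Tij
  => [i' j'|i' j' ltij Tij'].
  by apply: pat_iiiC.
split=> [k l ki|l ltlj|l ltjl].
- by rewrite pat_iii_row // -ord_oppE.
- by move: Tij'; rewrite /pat_iii; lia.
- exists (ord_opp l); rewrite ?ord_oppK //.
  rewrite ord_oppE; move: Tij'; rewrite /pat_iii; have := ltn_ord l.
  by case: (eqVneq (l : nat) 0%N); lia.
Qed.

Definition gram (a : 'I_n -> G) : 'M[nat]_n := bool_mx (fun i j => bf (a i) (a j)).

Definition lex_least_gram (X : 'M[nat]_n) : Prop :=
  (exists2 a : 'I_n -> G, w_basis a & gram a = X) /\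
  forall a : 'I_n -> G, w_basis a -> X = gram a \/ lex_lt X (gram a).

Lemma lex_least_gram_pattern (T : nat -> nat -> bool) :
  (exists2 a : 'I_n -> G, w_basis a & forall i j : 'I_n, bf (a i) (a j) = T i j) ->
  (forall a : 'I_n -> G, w_basis a -> forced_ones a T) ->
  lex_least_gram (bool_mx (fun i j => T i j)).
Proof.
move=> [a wa gram_a] forced; split.
  by exists a => //; apply/matrixP => i j; rewrite !mxE gram_a.
by move=> b /forced forced_b; apply: lex_min_of_forced => i j; apply: forced_b.
Qed.

Theorem lex_least_gram_i : w = 0 -> ~~ odd n -> lex_least_gram (Mat_i n).
Proof.
move=> w0 even_n; apply: (lex_least_gram_pattern (T := pat_i n)).
  exact: exists_basis_pat_i.
by move=> a [basis _]; apply: forced_ones_i.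
Qed.

Theorem lex_least_gram_ii : w <> 0 -> ~~ odd n -> lex_least_gram (Mat_ii n).
Proof.
move=> w0 even_n; apply: (lex_least_gram_pattern (T := pat_ii n)).
  exact: exists_basis_pat_ii.
by move=> a wa; apply: forced_ones_ii.
Qed.

Theorem lex_least_gram_iii : odd n -> lex_least_gram (Mat_iii n).
Proof.
move=> odd_n; have [/eqP w0 ww] := odd_order_bf_ww odd_n.
apply: (lex_least_gram_pattern (T := pat_iii n)); first exact: exists_basis_pat_iii.
by move=> a wa; apply: forced_ones_iii.
Qed.

End F2Form.

Section QuaternionicStructure.
Local Open Scope ring_scope.
Variable S : qstruct.
Hypothesis HS : is_qstruct S.
Variable e : QQ S.
Hypothesis e_neq0 : e != qz S.
Hypothesis QQ_two : forall z, z = qz S \/ z = e.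
Hypothesis nondeg : Defs.nondegenerate S.

Definition qbf (x y : QG S) : bool := qf x y != qz S.

Lemma qs_addxx (x : QG S) : x + x = 0.
Proof. by case: HS => -[addxx _] _; apply: addxx. Qed.

Lemma qfx0 (x : QG S) : qf x 0 = qz S.
Proof. by case: HS => _ [_ _ Q3 _]; rewrite -(addr0 0); apply/Q3. Qed.

Lemma qbfC x y : qbf x y = qbf y x.
Proof. by case: HS => _ [_ Q2 _ _]; rewrite /qbf Q2. Qed.

Lemma qbfD x y z : qbf x (y + z) = qbf x y (+) qbf x z.
Proof.
case: HS => _ [_ _ Q3 _].
have -> : qbf x (y + z) = (qf x y != qf x z).
  by rewrite /qbf; congr negb; apply/eqP/eqP => /Q3.
have qzNe : (qz S == e) = false by rewrite eq_sym; apply/negbTE.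
rewrite /qbf; case: (QQ_two (qf x y)) => ->; case: (QQ_two (qf x z)) => ->;
  by rewrite ?eqxx ?qzNe ?(negPf e_neq0).
Qed.

Lemma qbf_diag x : qbf x x = qbf x (qm1 S).
Proof. by case: HS => _ [Q1 _ Q3 _]; rewrite /qbf ((Q3 x (qm1 S) x).2 (Q1 x)). Qed.

Lemma qbf_nondeg x : (forall y, qbf x y = false) -> x = 0.
Proof. by move=> xorth; apply: nondeg => y; apply/eqP/negbFE/xorth. Qed.

Lemma unitv_e x y : unitv (qf x y) e = (qbf x y : nat)%:Z.
Proof.
rewrite /unitv /qbf; case: (QQ_two (qf x y)) => ->; last by rewrite eqxx e_neq0.
by rewrite (negPf e_neq0) eqxx.
Qed.

Lemma Beq_parity (v v' : QQ S -> int) : Beq v v' <-> ((v e - v' e) %% 2)%Z = 0.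
Proof.
split=> [[c ->]|/dvdz_mod0P/dvdzP[q vv']].
  apply/dvdz_mod0P; apply: rpred_sum => t _; apply: dvdz_mull.
  by rewrite /relator !unitv_e qbfD; case: (qbf _ t.1.2); case: (qbf _ t.2).
case: HS => -[_ surj] _; have [a0 [b0 qfe]] := surj e.
have sum_if (t0 : QG S * QG S * QG S) (c : int) (f : QG S * QG S * QG S -> int) :
    \sum_t (if t == t0 then c else 0) * f t = c * f t0.
  by rewrite (bigD1 t0) //= eqxx big1 ?addr0 // => t /negPf ->; rewrite mul0r.
(* The relators at (0, 0, 0) and (a0, b0, b0) are e_0 and 2 e_e - e_0. *)
pose c0 := v (qz S) - v' (qz S) + q.
exists (fun t => (if t == (0, 0, 0) then c0 else 0) + (if t == (a0, b0, b0) then q else 0)).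
move=> z; under eq_bigr do rewrite mulrDl.
rewrite big_split /= !sum_if /relator /= addr0 qs_addxx !qfx0 qfe.
have eNqz : (e == qz S) = false by apply/negbTE.
case: (QQ_two z) => ->; rewrite /unitv ?eqxx ?eNqz 1?eq_sym ?eNqz /=; lia.
Qed.

Lemma B_basis_one m (b : 'I_m -> QQ S -> int) : B_basis b ->
  m = 1%N /\ forall k, ((b k e) %% 2)%Z = 1.
Proof.
move=> [span unique].
have b_odd k : ((b k e) %% 2)%Z = 1.
  apply/eqP; apply: contraT => even_bk.
  have bk0 : Beq (Bsum b [set k]) (Bsum b set0).
    apply/Beq_parity; rewrite /Bsum big_set1 big_set0 subr0.
    by move: even_bk; lia.
  by move/setP: (unique _ _ bk0) => /(_ k); rewrite !inE eqxx.
split=> //; case: m b span unique b_odd => [|[|m]] b span unique b_odd //.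
  have [s /Beq_parity] := span (unitv e).
  by rewrite /Bsum big1 => [|[]]; rewrite // /unitv eqxx.
pose k0 : 'I_m.+2 := ord0; pose k1 : 'I_m.+2 := Ordinal (isT : (1 < m.+2)%N).
have k01 : k0 \notin [set k1] by rewrite inE.
have : Beq (Bsum b (k0 |: [set k1])) (Bsum b set0).
  apply/Beq_parity; rewrite /Bsum big_setU1 //= big_set1 big_set0.
  by have := b_odd k0; have := b_odd k1; lia.
by move=> /unique /setP /(_ k0); rewrite !inE eqxx.
Qed.

Lemma MAB_gram n (a : 'I_n -> QG S) m (b : 'I_m -> QQ S -> int) (X : 'M[nat]_n) :
  B_basis b -> is_MAB a b X -> X = gram qbf a.
Proof.
move=> /B_basis_one[m1 b_odd]; subst m => MAB; apply/matrixP => i j.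
have [s [/Beq_parity parity ->]] := MAB i j; rewrite mxE.
move: parity; rewrite /Bsum unitv_e; case: (set_ord1 s) => ->.
  by rewrite !big_set0; case: (qbf _ _) => /=; lia.
by rewrite !big_set1 /=; have := b_odd ord0; case: (qbf _ _) => /=; lia.
Qed.

Definition unit_basis : 'I_1 -> QQ S -> int := fun _ => unitv e.

Lemma B_basis_unit : B_basis unit_basis.
Proof.
split=> [v|s t /Beq_parity].
  have [even|odd] := boolP (((v e) %% 2)%Z == 0).
    by exists set0; apply/Beq_parity; rewrite /Bsum big_set0 subr0; apply/eqP.
  exists [set ord0]; apply/Beq_parity; rewrite /Bsum big_set1 /unit_basis /unitv eqxx.
  by move: odd; lia.
rewrite /Bsum; case: (set_ord1 s) => ->; case: (set_ord1 t) => -> //;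
  by rewrite ?big_set0 ?big_set1 /unit_basis /unitv eqxx /=; lia.
Qed.

Lemma MAB_unit n (a : 'I_n -> QG S) : is_MAB a unit_basis (gram qbf a).
Proof.
move=> i j; rewrite mxE; have [bij|nbij] := boolP (qbf (a i) (a j)).
  exists [set ord0]; rewrite big_set1; split=> //.
  by apply/Beq_parity; rewrite /Bsum big_set1 unitv_e bij /unit_basis /unitv eqxx.
exists set0; rewrite big_set0; split=> //.
by apply/Beq_parity; rewrite /Bsum big_set0 unitv_e (negbTE nbij).
Qed.

Lemma normal_matrix_of_lex_least_gram n (X : 'M[nat]_n) :
  lex_least_gram qbf (qm1 S) X -> normal_matrix S X.
Proof.
move=> [[a wa <-] least]; split.
  by exists a, 1%N, unit_basis; split; [exact: wa | exact: B_basis_unit | exact: MAB_unit].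
by move=> Y [b [m [B [Sb HB HM]]]]; rewrite (MAB_gram HB HM); apply: least.
Qed.

Variable n : nat.
Hypothesis cardG : #|QG S| = (2 ^ n)%N.

Lemma normal_matrix_i : qm1 S = 0 -> ~~ odd n -> normal_matrix S (Mat_i n).
Proof.
move=> w0 even_n; apply/normal_matrix_of_lex_least_gram.
exact: (lex_least_gram_i qs_addxx qbfC qbfD qbf_diag qbf_nondeg cardG).
Qed.

Lemma normal_matrix_ii : qm1 S <> 0 -> ~~ odd n -> normal_matrix S (Mat_ii n).
Proof.
move=> w0 even_n; apply/normal_matrix_of_lex_least_gram.
exact: (lex_least_gram_ii qs_addxx qbfC qbfD qbf_diag qbf_nondeg cardG).
Qed.

Lemma normal_matrix_iii : odd n -> normal_matrix S (Mat_iii n).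
Proof.
move=> odd_n; apply/normal_matrix_of_lex_least_gram.
exact: (lex_least_gram_iii qs_addxx qbfC qbfD qbf_diag qbf_nondeg cardG).
Qed.

End QuaternionicStructure.

Theorem proposition5 (S : qstruct) (n : nat) :
  is_qstruct S -> local_type S -> qs_order S n ->
  [/\ (~~ odd n -> qm1 S = 0%R -> normal_matrix S (Mat_i n)),
      (~~ odd n -> qm1 S <> 0%R -> normal_matrix S (Mat_ii n))
    & (odd n -> normal_matrix S (Mat_iii n))].
Proof.
move=> HS [nondeg _ /(card2_other (qz S))[e e_neq0 QQ_two]] [a basis].
have cardG : #|QG S| = (2 ^ n)%N := card_sum_basis basis.
split=> [even_n w0|even_n w0|odd_n].
- exact: (normal_matrix_i HS e_neq0 QQ_two nondeg cardG w0 even_n).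
- exact: (normal_matrix_ii HS e_neq0 QQ_two nondeg cardG w0 even_n).
- exact: (normal_matrix_iii HS e_neq0 QQ_two nondeg cardG odd_n).
Qed.
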